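(* Let $m\ge1$ be real and $\varphi=\mathrm{id}+f\in\mathrm{diff}^m_b(\mathbb{R}^n)$. Then $\varphi\in\mathrm{Diff}^m_{\mathrm{ap}}(\mathbb{R}^n)$ if and only if the set $$\mathcal S_\varphi=\{\varphi_c\}_{c\in\mathbb{R}^n},\qquad \varphi_c(x)=x+f(x+c),$$ is precompact in $\mathrm{diff}^m_b(\mathbb{R}^n)$. In this case $\mathcal S_\varphi$ and its closure in $\mathrm{diff}^m_b(\mathbb{R}^n)$ are contained in $\mathrm{Diff}^m_{\mathrm{ap}}(\mathbb{R}^n)$.
   Context: For real $m\ge0$, $C^m_b(\mathbb{R}^n,\mathbb{R})$ is the standard Hölder space (bounded continuous derivatives up to order $[m]$, plus $(m-[m])$-Hölder continuity of the order-$[m]$ derivatives if $m\notin\mathbb{Z}$, with the standard norm). $c^m_b$ is the closure of $C^\infty_b=\bigcap_kC^k_b$ in $C^m_b$. For $f\in C^m_b$, $\mathcal S_f=\{f(\cdot+c)\}_{c\in\mathbb{R}^n}$, and $C^m_{\mathrm{ap}}=\{f\in C^m_b:\mathcal S_f\text{ precompact in }C^m_b\}$. Vector-valued spaces are componentwise. $\mathrm{diff}^m_b(\mathbb{R}^n)$ is the set of $\varphi=\mathrm{id}+f$ with $f\in c^m_b(\mathbb{R}^n,\mathbb{R}^n)$ and $\inf_x\det(I+[d_xf])>0$; $\mathrm{Diff}^m_{\mathrm{ap}}(\mathbb{R}^n)$ is the set of $\varphi=\mathrm{id}+f$ with $f\in C^m_{\mathrm{ap}}(\mathbb{R}^n,\mathbb{R}^n)$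 and $\inf_x\det(I+[d_xf])>0$. Both carry the topology of $f$ (as open subsets of $c^m_b(\mathbb{R}^n,\mathbb{R}^n)$, resp. $C^m_{\mathrm{ap}}(\mathbb{R}^n,\mathbb{R}^n)$, via $\varphi\mapsto\varphi-\mathrm{id}$). *)

From HB Require Import structures.
From mathcomp Require Import all_boot all_order all_algebra.
From mathcomp Require Import all_classical all_reals all_analysis.
Set Implicit Arguments. Unset Strict Implicit. Unset Printing Implicit Defensive.
Import Order.TTheory GRing.Theory Num.Theory.
Import numFieldNormedType.Exports.
Local Open Scope classical_set_scope.
Local Open Scope ring_scope.

Section HolderDefs.
Variables (R : realType) (n : nat).
Notation V := 'rV[R]_n.

Definition ev (i : 'I_n) : V := delta_mx 0 i.

Fixpoint pd (s : seq 'I_n) (f : V -> R) : V -> R :=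
  match s with
  | [::] => f
  | i :: s' => fun x => derive (pd s' f) x (ev i)
  end.

Definition ipart (m : R) : nat := Num.truncn m.
Definition fpart (m : R) : R := m - (ipart m)%:R.

Definition Creg (k : nat) (f : V -> R) : Prop :=
  (forall s : seq 'I_n, (size s < k)%N -> forall x i, derivable (pd s f) x (ev i)) /\
  (forall s : seq 'I_n, (size s <= k)%N -> continuous (pd s f)).

Definition supn (g : V -> R) : \bar R :=
  ereal_sup [set (`|g x|)%:E | x in [set: V]].

Definition holder (a : R) (g : V -> R) : \bar R :=
  ereal_sup [set (`|g xy.1 - g xy.2| / (`|xy.1 - xy.2| `^ a))%:E
            | xy in [set xy : V * V | xy.1 != xy.2]].

Definition Cnorm (m : R) (f : V -> R) : \bar R :=
  ((\sum_(j < (ipart m).+1) \sum_(t : j.-tuple 'I_n) supn (pd t f)) +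
   (if fpart m == 0%R then 0
    else \sum_(t : (ipart m).-tuple 'I_n) holder (fpart m) (pd t f)))%E.

Definition Cb (m : R) (f : V -> R) : Prop :=
  Creg (ipart m) f /\ (Cnorm m f < +oo)%E.

Definition distC (m : R) (f g : V -> R) : \bar R := Cnorm m (fun x => f x - g x).

Definition Cinf (f : V -> R) : Prop := forall k : nat, Cb k%:R f.

Definition closure_in (T : Type) (d : T -> T -> \bar R) (X S : set T) : set T :=
  [set g | X g /\ forall e : R, 0 < e -> exists s, S s /\ (d s g < e%:E)%E].

Definition rel_open (T : Type) (d : T -> T -> \bar R) (K U : set T) : Prop :=
  forall x, K x -> U x -> exists2 e : R, 0 < e &
    forall y, K y -> (d x y < e%:E)%E -> U y.

Definition compact_d (T : Type) (d : T -> T -> \bar R) (K : set T) : Prop :=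
  forall (I : Type) (U : I -> set T), (forall i, rel_open d K (U i)) ->
    K `<=` \bigcup_i U i ->
    exists F : set I, finite_set F /\ K `<=` \bigcup_(i in F) U i.

Definition precompact_in (T : Type) (d : T -> T -> \bar R) (X S : set T) : Prop :=
  S `<=` X /\ compact_d d (closure_in d X S).

Definition cb (m : R) (f : V -> R) : Prop :=
  Cb m f /\ forall e : R, 0 < e -> exists g, Cinf g /\ (distC m f g < e%:E)%E.

Definition transl (f : V -> R) : set (V -> R) := [set (fun x => f (x + c)) | c in [set: V]].

Definition Cap (m : R) (f : V -> R) : Prop :=
  Cb m f /\ precompact_in (distC m) (Cb m) (transl f).

Definition comp (j : 'I_n) (F : V -> V) : V -> R := fun x => F x 0 j.
Definition cbV (m : R) (F : V -> V) : Prop := forall j, cb m (comp j F).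
Definition CapV (m : R) (F : V -> V) : Prop := forall j, Cap m (comp j F).
Definition NormV (m : R) (F : V -> V) : \bar R := (\sum_(j < n) Cnorm m (comp j F))%E.

Definition jac (F : V -> V) (x : V) : 'M[R]_n :=
  \matrix_(i, j) derive (comp i F) x (ev j).

Definition detcond (F : V -> V) : Prop :=
  (0 < ereal_inf [set (\det (1%:M + jac F x))%:E | x in [set: V]])%E.

Definition dispf (phi : V -> V) : V -> V := fun x => phi x - x.

Definition diffb (m : R) : set (V -> V) :=
  [set phi | cbV m (dispf phi) /\ detcond (dispf phi)].
Definition Diffap (m : R) : set (V -> V) :=
  [set phi | CapV m (dispf phi) /\ detcond (dispf phi)].

Definition distD (m : R) (phi psi : V -> V) : \bar R :=
  NormV m (fun x => dispf phi x - dispf psi x).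

Definition Sphi (phi : V -> V) : set (V -> V) :=
  [set (fun x => x + dispf phi (x + c)) | c in [set: V]].

End HolderDefs.

From Pilot Require Import Defs.
From HB Require Import structures.
From mathcomp Require Import all_boot all_order all_algebra finmap.
From mathcomp Require Import all_classical all_reals all_analysis.
From mathcomp Require Import ring.
Import Order.TTheory GRing.Theory Num.Theory.
Import numFieldNormedType.Exports.
Local Open Scope classical_set_scope.
Local Open Scope ring_scope.
Set Implicit Arguments. Unset Strict Implicit. Unset Printing Implicit Defensive.

(* Write phi = id + f. The distance on diff^m_b is the sum of the C^m distances of the
   components, and phi_c - id is the translate f(. + c), so everything reduces to
   translates of the components f_j. Compactness is used in its sequential form, which is
   equivalent for these extended pseudometrics (a Lebesgue number and total boundedness
   give finite subcovers).
   If S_phi is precompact, psi |-> (psi - id)_j is 1-Lipschitz from the closure of S_phi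
   to the closure of the translates of f_j, with dense image, so each S_{f_j} is
   precompact. Conversely, a diagonal extraction gives componentwise limits g_j for a
   sequence in the closure of S_phi, and id + g lies in that closure: each g_j is in c^m_b
   as a limit of translates of f_j, and the bound inf det (I + Df) > 0 is translation
   invariant and survives the limit because, for m >= 1, the C^m distance controls Df.
   Finally, the translates of a psi in the closure of S_phi are limits of translates of
   phi, so their closure is a closed subset of a compact set. *)

(** * Sequential compactness in extended pseudometric spaces *)

Lemma natSinv_lt_eventually (R : realType) (e : R) : 0 < e ->
  exists N, forall k, (N <= k)%N -> k.+1%:R^-1 < e.
Proof. by move=> e0; have [N _ hN] := near_infty_natSinv_lt (PosNum e0); exists N. Qed.

Lemma natSinv_le (R : realType) (j k : nat) : (j <= k)%N -> k.+1%:R^-1 <= j.+1%:R^-1 :> R.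
Proof. by move=> jk; rewrite lef_pV2 ?posrE // ler_nat ltnS. Qed.

Lemma natSinv_gt0 (R : realType) (k : nat) : 0 < k.+1%:R^-1 :> R.
Proof. by rewrite invr_gt0 ltr0n. Qed.

Lemma finite_nat_ub (A : set nat) : finite_set A -> exists M, forall k, A k -> (k <= M)%N.
Proof.
move=> /finite_fsetP[F ->]; exists (\max_(i <- F) i)%N => k kF.
exact: (leq_bigmax_seq (F := id) k kF isT).
Qed.

Section SequentialCompactness.
Variables (R : realType) (T : Type) (d : T -> T -> \bar R).

Definition cluster_pt (x : nat -> T) (y : T) :=
  forall e : R, 0 < e -> forall N, exists2 k, (N <= k)%N & (d y (x k) < e%:E)%E.

Definition seq_compact (A : set T) :=
  forall x : nat -> T, (forall k, A (x k)) -> exists2 y, A y & cluster_pt x y.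

Lemma cluster_pt_subseq x y : cluster_pt x y -> exists t : nat -> nat,
  forall k, (k <= t k)%N /\ (d y (x (t k)) < (k.+1%:R^-1)%:E)%E.
Proof.
move=> xy.
have /choice[t ht] k : exists t, (k <= t)%N /\ (d y (x t) < (k.+1%:R^-1)%:E)%E.
  by have [t kt dt] := xy _ (natSinv_gt0 R k) k; exists t.
by exists t.
Qed.

Variable X : set T.
Hypothesis d_ge0 : forall {x y}, X x -> X y -> (0 <= d x y)%E.
Hypothesis d_refl : forall {x}, X x -> d x x = 0%E.
Hypothesis d_sym : forall {x y}, X x -> X y -> d x y = d y x.
Hypothesis d_triangle : forall {x y z}, X x -> X y -> X z -> (d x z <= d x y + d y z)%E.

Lemma d_ltD x y z a b : X x -> X y -> X z ->
  (d x y < a%:E)%E -> (d y z < b%:E)%E -> (d x z < (a + b)%:E)%E.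
Proof.
move=> Xx Xy Xz xy yz; apply: le_lt_trans (d_triangle Xx Xy Xz) _.
by rewrite EFinD; apply: lteD.
Qed.

Lemma rel_open_ball (A : set T) y r : A `<=` X -> X y ->
  rel_open d A [set z | (d y z < r%:E)%E].
Proof.
move=> AX Xy z Az yz.
have yz_fin : d y z \is a fin_num.
  rewrite fin_numElt (lt_trans yz (ltry _)) andbT.
  by apply: lt_le_trans (d_ge0 Xy (AX _ Az)); rewrite ltNye.
exists (r - fine (d y z)); first by rewrite subr_gt0 -lte_fin fineK.
move=> w Aw zw; rewrite /= -[r](subrK (fine (d y z))) addrC EFinD fineK //.
by apply: le_lt_trans (d_triangle Xy (AX _ Az) (AX _ Aw)) _; rewrite lteD2lE.
Qed.

Lemma compact_seq_compact A : A `<=` X -> compact_d d A -> seq_compact A.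
Proof.
move=> AX cA x Ax; apply: contrapT => no_cluster.
have far y : exists eN : R * nat, A y ->
    0 < eN.1 /\ forall k, (eN.2 <= k)%N -> ~ (d y (x k) < eN.1%:E)%E.
  case: (pselect (A y)) => Ay; last by exists (0, 0%N).
  have : ~ cluster_pt x y by move=> yc; apply: no_cluster; exists y.
  move=> /existsNP[e /not_implyP[e0 /existsNP[N hN]]].
  by exists (e, N) => _; split => // k Nk dk; apply: hN; exists k.
have [eN HeN] := choice far.
pose U y := [set z | A y /\ (d y z < (eN y).1%:E)%E].
have [] := cA _ U.
- move=> y z Az [Ay yz].
  have [e e0 he] := rel_open_ball (r := (eN y).1) AX (AX _ Ay) Az yz.
  by exists e => // w Aw zw; split => //; apply: he.
- move=> y Ay; exists y => //; split => //.
  by rewrite d_refl; [exact: (HeN y Ay).1 | exact: AX].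
move=> F [finF coverF].
have [M hM] := finite_nat_ub (finite_image (fun y => (eN y).2) finF).
have [y Fy [Ay yxM]] := coverF _ (Ax M).
by apply: (HeN y Ay).2 yxM; apply: hM; exists y.
Qed.

Lemma lebesgue_number (A : set T) (I : Type) (U : I -> set T) :
  A `<=` X -> seq_compact A -> (forall i, rel_open d A (U i)) -> A `<=` \bigcup_i U i ->
  exists2 r : R, 0 < r & forall x, A x ->
    exists i, forall z, A z -> (d x z < r%:E)%E -> U i z.
Proof.
move=> AX Aseq Uo cover; apply: contrapT => no_r.
have bad k : exists x, A x /\ forall i, exists z,
    [/\ A z, (d x z < (k.+1%:R^-1)%:E)%E & ~ U i z].
  apply: contrapT => hk; apply: no_r; exists k.+1%:R^-1; first exact: natSinv_gt0.
  move=> x Ax; apply: contrapT => no_i; apply: hk; exists x; split => // i.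
  apply: contrapT => no_z; apply: no_i; exists i => z Az xz.
  by apply: contrapT => nU; apply: no_z; exists z.
have [x Hx] := choice bad.
have [y Ay yc] := Aseq x (fun k => (Hx k).1).
have [i _ Uiy] := cover y Ay.
have [e e0 he] := Uo i y Ay Uiy.
have e20 : 0 < e / 2 by rewrite divr_gt0.
have [N hN] := natSinv_lt_eventually e20.
have [k Nk yxk] := yc _ e20 N.
have [z [Az xz nUz]] := (Hx k).2 i.
apply: nUz; apply: he => //; rewrite [e]splitr.
apply: d_ltD (AX _ Ay) (AX _ (Hx k).1) (AX _ Az) yxk _.
by apply: lt_trans xz _; rewrite lte_fin; exact: hN.
Qed.

Lemma seq_compact_totally_bounded (A : set T) (r : R) : A `<=` X -> seq_compact A -> 0 < r ->
  exists F : set T, [/\ finite_set F, F `<=` A &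
    forall z, A z -> exists2 x, F x & (d x z < r%:E)%E].
Proof.
move=> AX Aseq r0; apply: contrapT => not_tb.
have far F : finite_set F -> F `<=` A ->
    exists z, A z /\ forall x, F x -> ~ (d x z < r%:E)%E.
  move=> finF FA; apply: contrapT => hF; apply: not_tb; exists F; split => // z Az.
  apply: contrapT => no_x; apply: hF; exists z; split => // x Fx xz.
  by apply: no_x; exists x.
have [z0 _] := far set0 (finite_set0 T) (sub0set _).
have /choice[next Hnext] F : exists z,
    finite_set F /\ F `<=` A -> A z /\ forall x, F x -> ~ (d x z < r%:E)%E.
  case: (pselect (finite_set F /\ F `<=` A)) => [[finF FA]|]; last by exists z0.
  by have [z hz] := far F finF FA; exists z.
(* [C k] is the set {x 0, ..., x k.-1} of points chosen so far, each new point lying at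
   distance at least [r] from the previous ones. *)
pose C := fix C k := if k is k'.+1 then C k' `|` [set next (C k')] else set0.
pose x k := next (C k).
have C_ok k : finite_set (C k) /\ C k `<=` A.
  elim: k => [|k [finC CA]]; first by split; [exact: finite_set0 | exact: sub0set].
  split; first by rewrite finite_setU; split => //; exact: finite_set1.
  by rewrite subUset; split => // _ ->; exact: (Hnext _ (conj finC CA)).1.
have Ax k : A (x k) by exact: (Hnext _ (C_ok k)).1.
have Cx j k : (j < k)%N -> C k (x j).
  elim: k => // k IH; rewrite ltnS leq_eqVlt => /orP[/eqP -> | /IH]; [by right | by left].
have sep j k : (j < k)%N -> ~ (d (x j) (x k) < r%:E)%E.
  by move=> jk; apply: (Hnext _ (C_ok k)).2; exact: Cx.
have r20 : 0 < r / 2 by rewrite divr_gt0.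
have [y Ay yc] := Aseq x Ax.
have [k1 _ yx1] := yc _ r20 0%N.
have [k2 k12 yx2] := yc _ r20 k1.+1.
apply: (sep k1 k2 k12); rewrite [r]splitr.
have [Xx1 Xy] : X (x k1) /\ X y by split; apply: AX.
apply: (d_ltD Xx1 Xy (AX _ (Ax k2)) _ yx2).
by rewrite d_sym.
Qed.

Lemma seq_compact_compact (A : set T) : A `<=` X -> seq_compact A -> compact_d d A.
Proof.
move=> AX Aseq I U Uo cover.
case: (pselect (A !=set0)) => [[z0 /cover[i0 _ _]]|A0]; last first.
  by exists set0; split => // z Az; case: A0; exists z.
have [r r0 leb] := lebesgue_number AX Aseq Uo cover.
have [F [finF FA Fcover]] := seq_compact_totally_bounded AX Aseq r0.
have /choice[idx Hidx] x : exists i, F x -> forall z, A z -> (d x z < r%:E)%E -> U i z.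
  case: (pselect (F x)) => [/FA/leb[i hi]|]; last by exists i0.
  by exists i.
exists (idx @` F); split; first exact: finite_image.
move=> z Az; have [x Fx xz] := Fcover z Az.
by exists (idx x); [exists x | exact: Hidx].
Qed.

Lemma compact_dP (A : set T) : A `<=` X -> compact_d d A <-> seq_compact A.
Proof.
by move=> AX; split; [exact: compact_seq_compact | exact: seq_compact_compact].
Qed.


Lemma closure_in_sub (Y S S' : set T) : Y `<=` X -> S' `<=` X ->
  S `<=` closure_in d Y S' -> closure_in d Y S `<=` closure_in d Y S'.
Proof.
move=> YX S'X SS' g [Yg Sg]; split => // e e0.
have e20 : 0 < e / 2 by rewrite divr_gt0.
have [s [Ss sg]] := Sg _ e20.
have [Ys /(_ _ e20)[s' [S's s's]]] := SS' _ Ss.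
exists s'; split => //; rewrite [e]splitr.
exact: d_ltD (S'X _ S's) (YX _ Ys) (YX _ Yg) s's sg.
Qed.

Lemma cluster_pt_closure_in (Y S : set T) (x : nat -> T) y : Y `<=` X -> S `<=` X ->
  (forall k, closure_in d Y S (x k)) -> Y y -> cluster_pt x y -> closure_in d Y S y.
Proof.
move=> YX SX clx Yy yc; split => // e e0.
have e20 : 0 < e / 2 by rewrite divr_gt0.
have [k _ yxk] := yc _ e20 0%N.
have [Yxk /(_ _ e20)[s [Ss sxk]]] := clx k.
exists s; split => //; rewrite [e]splitr.
apply: (d_ltD (SX _ Ss) (YX _ Yxk) (YX _ Yy) sxk).
by rewrite d_sym //; apply: YX.
Qed.

Lemma seq_compact_closure_in_sub (Y S S' : set T) : Y `<=` X -> S' `<=` X ->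
  S `<=` closure_in d Y S' -> seq_compact (closure_in d Y S') ->
  seq_compact (closure_in d Y S).
Proof.
move=> YX S'X SS' cS' x clx.
have subS := closure_in_sub YX S'X SS'.
have [y [Yy _] yc] := cS' x (fun k => subS _ (clx k)).
exists y => //; apply: cluster_pt_closure_in yc => //.
by move=> s /SS'[Ys _]; exact: YX.
Qed.

End SequentialCompactness.

Lemma seq_compact_lipschitz_dense (R : realType) (T U : Type)
    (d : T -> T -> \bar R) (e : U -> U -> \bar R) (F : T -> U) (A : set T) (B : set U) :
  (forall x y z, B x -> B y -> B z -> (e x z <= e x y + e y z)%E) ->
  (forall a, A a -> B (F a)) ->
  (forall a a', A a -> A a' -> (e (F a) (F a') <= d a a')%E) ->
  (forall b, B b -> forall r : R, 0 < r -> exists2 a, A a & (e (F a) b < r%:E)%E) ->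
  seq_compact d A -> seq_compact e B.
Proof.
move=> e_triangle FAB F_lip F_dense Aseq b Bb.
have /choice[a Ha] k : exists a, A a /\ (e (F a) (b k) < (k.+1%:R^-1)%:E)%E.
  by have [a Aa ab] := F_dense _ (Bb k) _ (natSinv_gt0 R k); exists a.
have [y Ay yc] := Aseq a (fun k => (Ha k).1).
exists (F y); first exact: FAB.
move=> r r0 N; have r20 : 0 < r / 2 by rewrite divr_gt0.
have [N' hN'] := natSinv_lt_eventually r20.
have [k Nk yak] := yc _ r20 (maxn N N').
exists k; first by apply: leq_trans Nk; rewrite leq_maxl.
have FAk := FAB _ (Ha k).1.
apply: le_lt_trans (e_triangle _ _ _ (FAB _ Ay) FAk (Bb k)) _.
rewrite [r]splitr EFinD; apply: lteD; first exact: le_lt_trans (F_lip _ _ Ay (Ha k).1) yak.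
apply: lt_trans (Ha k).2 _; rewrite lte_fin; apply: hN'.
by apply: leq_trans Nk; rewrite leq_maxr.
Qed.

Lemma diagonal_extraction (R : realType) (T : Type) (d : T -> T -> \bar R) (n : nat)
    (K : 'I_n -> set T) (x : nat -> 'I_n -> T) :
  (forall j, seq_compact d (K j)) -> (forall k j, K j (x k j)) ->
  exists s : nat -> nat, (forall k, (k <= s k)%N) /\
    exists2 g : 'I_n -> T, (forall j, K j (g j)) &
      forall j k, (d (g j) (x (s k) j) < (k.+1%:R^-1)%:E)%E.
Proof.
move=> Kseq Kx.
have partial l : (l <= n)%N -> exists s : nat -> nat, (forall k, (k <= s k)%N) /\
    forall j : 'I_n, (j < l)%N -> exists g, K j g /\
      forall k, (d g (x (s k) j) < (k.+1%:R^-1)%:E)%E.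
  elim: l => [_|l IH ln]; first by exists id.
  have [s [s_ge s_cvg]] := IH (ltnW ln).
  pose jl := Ordinal ln.
  have [g0 Kg0 g0c] := Kseq jl (fun k => x (s k) jl) (fun k => Kx _ jl).
  have [t t_cvg] := cluster_pt_subseq g0c.
  exists (s \o t); split => [k|j].
    by apply: leq_trans (t_cvg k).1 (s_ge _).
  rewrite ltnS leq_eqVlt => /orP[/eqP jE|jl'].
    have -> : j = jl by apply: val_inj; exact: jE.
    by exists g0; split => // k; exact: (t_cvg k).2.
  have [g [Kg g_cvg]] := s_cvg j jl'; exists g; split => // k /=.
  apply: lt_le_trans (g_cvg (t k)) _; rewrite lee_fin.
  exact: natSinv_le (t_cvg k).1.
have [s [s_ge s_cvg]] := partial n (leqnn n).
have /choice[g Hg] j : exists g, K j g /\ forall k, (d g (x (s k) j) < (k.+1%:R^-1)%:E)%E.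
  exact: s_cvg j (ltn_ord j).
by exists s; split => //; exists g => [j|j]; [exact: (Hg j).1 | exact: (Hg j).2].
Qed.

(** * Translation invariance *)

Section Translation.
Variables (R : realType) (n : nat).
Local Notation V := 'rV[R]_n.

Lemma translate_shift (g : V -> R) (c a : V) :
  (fun x => g (x + c)) \o shift a = g \o shift (a + c).
Proof. by apply: funext => x /=; rewrite addrA. Qed.

Lemma derive_translate (g : V -> R) (c a v : V) :
  derive (fun x => g (x + c)) a v = derive g (a + c) v.
Proof. by rewrite /derive translate_shift. Qed.

Lemma derivable_translate (g : V -> R) (c a v : V) :
  derivable (fun x => g (x + c)) a v = derivable g (a + c) v.
Proof. by rewrite /derivable translate_shift. Qed.

Lemma pd_translate s (g : V -> R) (c : V) :
  pd s (fun x => g (x + c)) = fun x => pd s g (x + c).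
Proof. by elim: s => [|i s IH] //=; apply: funext => x; rewrite IH derive_translate. Qed.

Lemma continuous_translate (g : V -> R) (c : V) :
  continuous g -> continuous (fun x : V => g (x + c)).
Proof.
move=> cg x; apply: continuous_comp; last exact: cg.
exact: (@cvgD _ _ _ (nbhs x) _ id (fun _ => c) x c cvg_id (cvg_cst c)).
Qed.

Lemma Creg_translate k (g : V -> R) c : Creg k g -> Creg k (fun x => g (x + c)).
Proof.
move=> [g_der g_cont]; split => s hs; rewrite pd_translate.
- by move=> x i; rewrite derivable_translate; exact: g_der.
- exact/continuous_translate/g_cont.
Qed.

Lemma supn_translate (g : V -> R) c : supn (fun x => g (x + c)) = supn g.
Proof.
rewrite /supn; congr ereal_sup; apply/seteqP; split => _ [x _ <-].
- by exists (x + c).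
- by exists (x - c) => //; rewrite subrK.
Qed.

Lemma holder_translate a (g : V -> R) c : holder a (fun x => g (x + c)) = holder a g.
Proof.
have subDD (x y b : V) : (x + b) - (y + b) = x - y by rewrite opprD addrACA subrr addr0.
rewrite /holder; congr ereal_sup; apply/seteqP; split => _ [[x y] /= xy <-].
- exists (x + c, y + c) => /=; last by rewrite subDD.
  by apply: contra xy => /eqP/addIr ->.
- exists (x - c, y - c) => /=; last by rewrite !subrK subDD.
  by apply: contra xy => /eqP/addIr ->.
Qed.

Lemma Cnorm_translate m (g : V -> R) c : Cnorm m (fun x => g (x + c)) = Cnorm m g.
Proof.
rewrite /Cnorm; congr (_ + _)%E.
- by apply: eq_bigr => j _; apply: eq_bigr => t _; rewrite pd_translate supn_translate.
- by case: ifP => // _; apply: eq_bigr => t _; rewrite pd_translate holder_translate.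
Qed.

Lemma distC_translate m (f g : V -> R) c :
  distC m (fun x => f (x + c)) (fun x => g (x + c)) = distC m f g.
Proof. exact: (Cnorm_translate m (fun x => f x - g x)). Qed.

Lemma Cb_translate m (g : V -> R) c : Cb m g -> Cb m (fun x => g (x + c)).
Proof. by move=> [g_reg g_fin]; split; [exact: Creg_translate | rewrite Cnorm_translate]. Qed.

Lemma cb_translate m (g : V -> R) c : cb m g -> cb m (fun x => g (x + c)).
Proof.
move=> [g_Cb g_approx]; split; first exact: Cb_translate.
move=> e e0; have [h [h_inf gh]] := g_approx e e0.
exists (fun x => h (x + c)); split; last by rewrite distC_translate.
by move=> k; exact: Cb_translate.
Qed.

Lemma transl_translate (g : V -> R) c : transl (fun x => g (x + c)) = transl g.
Proof.
apply/seteqP; split => _ [b _ <-].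
- by exists (b + c) => //; apply: funext => x; rewrite addrA.
- by exists (b - c) => //; apply: funext => x; rewrite -addrA subrK.
Qed.

Lemma jac_translate (F : V -> V) c x : jac (fun x => F (x + c)) x = jac F (x + c).
Proof. by apply/matrixP => i j; rewrite !mxE; exact: derive_translate. Qed.

Lemma detcond_translate (F : V -> V) c : detcond (fun x => F (x + c)) = detcond F.
Proof.
rewrite /detcond; congr (_ < ereal_inf _)%E; apply/seteqP; split => _ [x _ <-].
- by exists (x + c) => //; rewrite jac_translate.
- by exists (x - c) => //; rewrite jac_translate subrK.
Qed.

Definition phi_shift (phi : V -> V) c : V -> V := fun x => x + dispf phi (x + c).

Lemma dispf_phi_shift phi c : dispf (phi_shift phi c) = fun x => dispf phi (x + c).
Proof. by apply: funext => x; rewrite /dispf /phi_shift addrAC subrr add0r. Qed.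

Lemma diffb_phi_shift m phi c : diffb m phi -> diffb m (phi_shift phi c).
Proof.
move=> [phi_cb phi_det]; rewrite /diffb /= dispf_phi_shift detcond_translate.
by split => // j; exact: (cb_translate c (phi_cb j)).
Qed.

Lemma Diffap_phi_shift m phi c : Diffap m phi -> Diffap m (phi_shift phi c).
Proof.
move=> [phi_ap phi_det]; rewrite /Diffap /= dispf_phi_shift detcond_translate.
split => // j; have [fj_Cb fj_pc] := phi_ap j; split; first exact: (Cb_translate c fj_Cb).
by rewrite (transl_translate (Defs.comp j (dispf phi)) c).
Qed.

End Translation.

(** * The C^m_b distances *)

Section CmDistance.
Variables (R : realType) (n : nat) (m : R).
Hypothesis m_ge1 : 1 <= m.
Local Notation V := 'rV[R]_n.
Local Notation k0 := (ipart m).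

Lemma ipart_gt0 : (0 < k0)%N.
Proof. by rewrite /ipart truncn_ge_nat ?(le_trans ler01 m_ge1). Qed.

Lemma supn_ge0 (g : V -> R) : (0 <= supn g)%E.
Proof. by apply: le_trans (ereal_sup_ubound (ex_intro2 _ _ 0 I erefl)); rewrite lee_fin. Qed.

Lemma holder_ge0 a (g : V -> R) (i : 'I_n) : (0 <= holder a g)%E.
Proof.
have ev_neq0 : (0 : V) != ev R i.
  by apply/eqP => /matrixP/(_ 0 i); rewrite !mxE !eqxx /= => /eqP; rewrite eq_sym oner_eq0.
apply: le_trans (ereal_sup_ubound (ex_intro2 _ _ (0, ev R i) ev_neq0 erefl)).
by rewrite lee_fin divr_ge0 // powR_ge0.
Qed.

(* [holder] is [-oo] when [n = 0] (a supremum over the empty set); the Hoelder terms are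
   indexed by [ipart m]-tuples of coordinates, and [ipart m >= 1] extracts a coordinate. *)
Lemma Cnorm_ge0 (g : V -> R) : (0 <= Cnorm m g)%E.
Proof.
rewrite /Cnorm; apply: adde_ge0.
  by apply: sume_ge0 => j _; apply: sume_ge0 => t _; exact: supn_ge0.
case: ifP => _ //; apply: sume_ge0 => t _.
exact: (holder_ge0 _ _ (tnth t (Ordinal ipart_gt0))).
Qed.

Lemma pd_sub k (f g : V -> R) s : Creg k f -> Creg k g -> (size s <= k)%N ->
  pd s (fun x => f x - g x) = fun x => pd s f x - pd s g x.
Proof.
move=> [f_der _] [g_der _]; elim: s => [|i s IH] //= hs; apply: funext => x.
by rewrite IH ?(ltnW hs) //; exact: deriveB (f_der s hs x i) (g_der s hs x i).
Qed.

Lemma pd0 s : pd s (fun _ : V => 0 : R) = fun _ => 0.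
Proof. by elim: s => [|i s IH] //=; rewrite IH; apply: funext => x; exact: derive_cst. Qed.

Lemma Cnorm_le_add (f g h : V -> R) :
  (forall s, (size s <= k0)%N -> (supn (pd s f) <= supn (pd s g) + supn (pd s h))%E) ->
  (forall s, (size s <= k0)%N ->
     (holder (fpart m) (pd s f) <= holder (fpart m) (pd s g) + holder (fpart m) (pd s h))%E) ->
  (Cnorm m f <= Cnorm m g + Cnorm m h)%E.
Proof.
move=> supn_le holder_le; rewrite /Cnorm addeACA; apply: leeD.
- rewrite -big_split; apply: lee_sum => j _; rewrite -big_split; apply: lee_sum => t _.
  by apply: supn_le; rewrite size_tuple -ltnS.
- case: ifP => _; first by rewrite adde0.
  by rewrite -big_split; apply: lee_sum => t _; apply: holder_le; rewrite size_tuple.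
Qed.

Lemma Cnorm_eq_pd (f g : V -> R) :
  (forall s, (size s <= k0)%N -> supn (pd s f) = supn (pd s g)) ->
  (forall s, (size s <= k0)%N -> holder (fpart m) (pd s f) = holder (fpart m) (pd s g)) ->
  Cnorm m f = Cnorm m g.
Proof.
move=> supn_eq holder_eq; rewrite /Cnorm; congr (_ + _)%E.
- by apply: eq_bigr => j _; apply: eq_bigr => t _; apply: supn_eq; rewrite size_tuple -ltnS.
- by case: ifP => // _; apply: eq_bigr => t _; apply: holder_eq; rewrite size_tuple.
Qed.

Lemma Cnorm0 : Cnorm m (fun _ : V => 0) = 0%E.
Proof.
apply/eqP; rewrite eq_le Cnorm_ge0 andbT /Cnorm.
have supn0 : (supn (fun _ : V => 0%R) <= 0)%E.
  by apply: ge_ereal_sup => _ [x _ <-]; rewrite normr0.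
have holder0 : (holder (fpart m) (fun _ : V => 0%R) <= 0)%E.
  by apply: ge_ereal_sup => _ [[x y] /= _ <-]; rewrite subrr normr0 mul0r.
rewrite -[leRHS]adde0; apply: leeD.
  by apply: sume_le0 => j _; apply: sume_le0 => t _; rewrite pd0.
by case: ifP => // _; apply: sume_le0 => t _; rewrite pd0.
Qed.

Lemma distC_ge0 (f g : V -> R) : (0 <= distC m f g)%E.
Proof. exact: Cnorm_ge0. Qed.

Lemma distCxx (f : V -> R) : distC m f f = 0%E.
Proof.
rewrite /distC (_ : (fun x => f x - f x) = fun _ => 0) ?Cnorm0 //.
by apply: funext => x; rewrite subrr.
Qed.

Lemma distC_sym (f g : V -> R) : Creg k0 f -> Creg k0 g -> distC m f g = distC m g f.
Proof.
move=> f_reg g_reg; apply: Cnorm_eq_pd => s hs;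
  rewrite (pd_sub f_reg g_reg hs) (pd_sub g_reg f_reg hs).
- rewrite /supn; congr ereal_sup; apply/seteqP.
  by split => _ [x _ <-]; exists x => //; rewrite distrC.
- rewrite /holder; congr ereal_sup; apply/seteqP.
  split => _ [[x y] /= xy <-]; exists (x, y) => //=; congr ((_ / _)%:E);
    by rewrite -normrN; congr `|_|; ring.
Qed.

Lemma distC_triangle (f g h : V -> R) : Creg k0 f -> Creg k0 g -> Creg k0 h ->
  (distC m f h <= distC m f g + distC m g h)%E.
Proof.
move=> f_reg g_reg h_reg; apply: Cnorm_le_add => s hs;
  rewrite (pd_sub f_reg h_reg hs) (pd_sub f_reg g_reg hs) (pd_sub g_reg h_reg hs).
- apply: ge_ereal_sup => _ [x _ <-].
  apply: le_trans (_ : `|pd s f x - pd s g x|%:E + `|pd s g x - pd s h x|%:E <= _)%E.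
    by rewrite -EFinD lee_fin; apply: le_trans (ler_normD _ _); rewrite addrA subrK.
  by apply: leeD; apply: ereal_sup_ubound; exists x.
- apply: ge_ereal_sup => _ [[x y] /= xy <-].
  set D := `|x - y| `^ fpart m.
  apply: le_trans (_ : (`|(pd s f x - pd s g x) - (pd s f y - pd s g y)| / D)%:E +
      (`|(pd s g x - pd s h x) - (pd s g y - pd s h y)| / D)%:E <= _)%E; last first.
    by apply: leeD; apply: ereal_sup_ubound; exists (x, y).
  rewrite -EFinD lee_fin -mulrDl ler_wpM2r ?invr_ge0 ?powR_ge0 //.
  have -> : (pd s f x - pd s h x) - (pd s f y - pd s h y) =
      (pd s f x - pd s g x) - (pd s f y - pd s g y) +
      ((pd s g x - pd s h x) - (pd s g y - pd s h y)) by ring.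
  exact: ler_normD.
Qed.

Lemma supn_pd_le_Cnorm (g : V -> R) s : (size s <= k0)%N -> (supn (pd s g) <= Cnorm m g)%E.
Proof.
move=> hs; rewrite /Cnorm.
apply: le_trans (leeDl _ _); last first.
  case: ifP => _ //; apply: sume_ge0 => t _.
  exact: (holder_ge0 _ _ (tnth t (Ordinal ipart_gt0))).
have s_lt : (size s < k0.+1)%N by [].
rewrite (bigD1 (Ordinal s_lt)) //=.
apply: le_trans (leeDl _ _); last first.
  by apply: sume_ge0 => j _; apply: sume_ge0 => t _; exact: supn_ge0.
rewrite (bigD1 (in_tuple s : (Ordinal s_lt).-tuple 'I_n)) //=.
by apply: leeDl; apply: sume_ge0 => t _; exact: supn_ge0.
Qed.

Lemma derive_sub_le_distC (f g : V -> R) (i : 'I_n) x : Creg k0 f -> Creg k0 g ->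
  (`|derive f x (ev R i) - derive g x (ev R i)|%:E <= distC m f g)%E.
Proof.
move=> f_reg g_reg.
have i_k0 : (size [:: i] <= k0)%N := ipart_gt0.
apply: le_trans (supn_pd_le_Cnorm _ i_k0).
by apply: ereal_sup_ubound; exists x => //; rewrite (pd_sub f_reg g_reg i_k0).
Qed.

End CmDistance.

Lemma cvg_det (R : realType) (n : nat) (A : nat -> 'M[R]_n) (B : 'M[R]_n) :
  (forall i j, (fun k => A k i j) @ \oo --> B i j) -> (fun k => \det (A k)) @ \oo --> \det B.
Proof.
move=> A_cvg; rewrite /determinant; apply: (cvg_big add_continuous) => // s _.
apply: cvgM; first exact: cvg_cst.
by apply: (cvg_big mul_continuous) => // i _; exact: A_cvg.
Qed.

Section DispDistance.
Variables (R : realType) (n : nat) (m : R).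
Hypothesis m_ge1 : 1 <= m.
Local Notation V := 'rV[R]_n.
Local Notation k0 := (ipart m).

Lemma detcondP (F : V -> V) :
  detcond F <-> exists2 r : R, 0 < r & forall x, r <= \det (1%:M + jac F x).
Proof.
rewrite /detcond; set S := [set _ | x in _]; split => [|[r r0 hr]]; last first.
  apply: lt_le_trans (_ : (0 < r%:E)%E) _; first by rewrite lte_fin.
  by apply/ereal_infP => _ [x _ <-]; rewrite lee_fin.
have inf_le x : (ereal_inf S <= (\det (1%:M + jac F x))%:E)%E.
  by apply: ereal_inf_lbound; exists x.
case E: (ereal_inf S) => [r| |] // r0; last by have := inf_le 0; rewrite E leye_eq.
by exists r => // x; rewrite -lee_fin -E.
Qed.

Definition disp_comp (j : 'I_n) (psi : V -> V) : V -> R := Defs.comp j (dispf psi).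

Definition disp_reg : set (V -> V) := [set psi | forall j, Creg k0 (disp_comp j psi)].

Lemma diffb_disp_reg : diffb m `<=` disp_reg.
Proof. by move=> psi [psi_cb _] j; exact: (psi_cb j).1.1. Qed.

Lemma distD_sum (psi chi : V -> V) :
  distD m psi chi = (\sum_(j < n) distC m (disp_comp j psi) (disp_comp j chi))%E.
Proof.
apply: eq_bigr => j _; rewrite /distC /disp_comp /Defs.comp.
by congr Cnorm; apply: funext => x; rewrite !mxE.
Qed.

Lemma distD_ge0 (psi chi : V -> V) : (0 <= distD m psi chi)%E.
Proof. by rewrite distD_sum; apply: sume_ge0 => j _; exact: distC_ge0. Qed.

Lemma distDxx (psi : V -> V) : distD m psi psi = 0%E.
Proof. by rewrite distD_sum big1 // => j _; exact: distCxx. Qed.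

Lemma distD_sym (psi chi : V -> V) : disp_reg psi -> disp_reg chi ->
  distD m psi chi = distD m chi psi.
Proof.
by move=> psi_reg chi_reg; rewrite !distD_sum; apply: eq_bigr => j _; exact: distC_sym.
Qed.

Lemma distD_triangle (psi chi xi : V -> V) : disp_reg psi -> disp_reg chi -> disp_reg xi ->
  (distD m psi xi <= distD m psi chi + distD m chi xi)%E.
Proof.
move=> psi_reg chi_reg xi_reg; rewrite !distD_sum -big_split.
by apply: lee_sum => j _; exact: distC_triangle.
Qed.

Lemma distC_le_distD (psi chi : V -> V) j :
  (distC m (disp_comp j psi) (disp_comp j chi) <= distD m psi chi)%E.
Proof.
rewrite distD_sum (bigD1 j) //=; apply: leeDl.
by apply: sume_ge0 => i _; exact: distC_ge0.
Qed.

Lemma jac_entry_cvg (psi_ : nat -> V -> V) (psi : V -> V) x i j :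
  (forall k, disp_reg (psi_ k)) -> disp_reg psi ->
  (forall k, (distD m (psi_ k) psi < (k.+1%:R^-1)%:E)%E) ->
  (fun k => (1%:M + jac (dispf (psi_ k)) x) i j) @ \oo --> (1%:M + jac (dispf psi) x) i j.
Proof.
move=> psik_reg psi_reg psik_cvg.
under eq_cvg do rewrite !mxE; rewrite !mxE; apply: cvgD; first exact: cvg_cst.
apply/cvgrPdist_lt => e e0; have [N hN] := natSinv_lt_eventually e0; exists N => // k /= Nk.
rewrite -lte_fin.
apply: le_lt_trans (derive_sub_le_distC m_ge1 j x (psi_reg i) (psik_reg k i)) _.
rewrite (distC_sym (psi_reg i) (psik_reg k i)).
apply: le_lt_trans (distC_le_distD _ _ _) _; apply: lt_trans (psik_cvg k) _.
by rewrite lte_fin; exact: hN.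
Qed.

End DispDistance.

(** * Precompactness of the translates *)

Section TranslateClosure.
Variables (R : realType) (n : nat) (m : R).
Local Notation V := 'rV[R]_n.
Local Notation transl_cl f := (closure_in (distC m) (Cb m) (transl f)).

Lemma Cinf_Creg k (h : V -> R) : Cinf h -> Creg k h.
Proof. by move=> h_inf; have := (h_inf k).1; rewrite /ipart natrK. Qed.

Lemma closure_transl_translate (f g : V -> R) : transl_cl f g -> transl g `<=` transl_cl f.
Proof.
move=> [g_Cb g_cl] _ [b _ <-]; split; first exact: Cb_translate.
move=> e e0; have [_ [[c _ <-] fg]] := g_cl e e0.
exists (fun x => f (x + b + c)); split.
  by exists (b + c) => //; apply: funext => x; rewrite addrA.
by rewrite (distC_translate m (fun y => f (y + c)) g b).
Qed.

Lemma closure_transl_cb (f : V -> R) : cb m f -> transl_cl f `<=` cb m.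
Proof.
move=> f_cb g [g_Cb g_cl]; split => // e e0.
have e20 : 0 < e / 2 by rewrite divr_gt0.
have [_ [[b _ <-] fg]] := g_cl _ e20.
have [fb_Cb /(_ _ e20)[h [h_inf fh]]] := cb_translate b f_cb.
exists h; split => //; rewrite [e]splitr.
have h_reg : Creg (ipart m) h := Cinf_Creg _ h_inf.
have [[g_reg _] [fb_reg _]] := (g_Cb, fb_Cb).
apply: le_lt_trans (distC_triangle g_reg fb_reg h_reg) _.
by rewrite (distC_sym g_reg fb_reg) EFinD; exact: lteD.
Qed.

End TranslateClosure.

Section PrecompactTranslates.
Variables (R : realType) (n : nat) (m : R).
Hypothesis m_ge1 : 1 <= m.
Local Notation V := 'rV[R]_n.
Local Notation k0 := (ipart m).

Lemma compact_distCP (A : set (V -> R)) : A `<=` Creg k0 ->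
  compact_d (distC m) A <-> seq_compact (distC m) A.
Proof.
apply: compact_dP => [f g _ _|f _|f g|f g h]; first exact: distC_ge0.
- exact: distCxx.
- exact: distC_sym.
- exact: distC_triangle.
Qed.

Lemma compact_distDP (A : set (V -> V)) : A `<=` disp_reg m ->
  compact_d (distD m) A <-> seq_compact (distD m) A.
Proof.
apply: compact_dP => [psi chi _ _|psi _|psi chi|psi chi xi]; first exact: distD_ge0.
- exact: distDxx.
- exact: distD_sym.
- exact: distD_triangle.
Qed.

Lemma distD_le_componentwise (psi chi : V -> V) (r : R) :
  (forall j, distC m (disp_comp j psi) (disp_comp j chi) <= r%:E)%E ->
  (distD m psi chi <= (n%:R * r)%:E)%E.
Proof.
move=> comp_le; have -> : (n%:R * r)%:E = (\sum_(j < n) r%:E)%E.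
  by rewrite sumEFin sumr_const card_ord mulr_natl.
by rewrite distD_sum; apply: lee_sum => j _; exact: comp_le.
Qed.

Lemma disp_comp_phi_shift (phi : V -> V) j c :
  disp_comp j (phi_shift phi c) = fun x => disp_comp j phi (x + c).
Proof. by rewrite /disp_comp dispf_phi_shift. Qed.

Variable phi : V -> V.
Hypothesis phi_diffb : diffb m phi.
Local Notation Sphi_cl := (closure_in (distD m) (diffb m) (Sphi phi)).
Local Notation comp_transl_cl j := (closure_in (distC m) (Cb m) (transl (disp_comp j phi))).

Lemma Sphi_sub_closure : Sphi phi `<=` Sphi_cl.
Proof.
move=> _ [c _ <-]; split; first exact: diffb_phi_shift.
by move=> e e0; exists (phi_shift phi c); split; [exists c | rewrite distDxx].
Qed.

Lemma phi_shift_disp_reg c : disp_reg m (phi_shift phi c).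
Proof. exact/diffb_disp_reg/diffb_phi_shift. Qed.

Lemma closure_Sphi_disp_reg : Sphi_cl `<=` disp_reg m.
Proof. by move=> psi [/diffb_disp_reg]. Qed.

Lemma closure_Sphi_comp j psi : Sphi_cl psi -> comp_transl_cl j (disp_comp j psi).
Proof.
move=> [psi_diffb psi_cl]; split; first exact: (psi_diffb.1 j).1.
move=> e e0; have [_ [[c _ <-] phic_psi]] := psi_cl e e0.
exists (disp_comp j (phi_shift phi c)); split.
  by exists c => //; rewrite disp_comp_phi_shift.
exact: le_lt_trans (distC_le_distD m_ge1 _ _ j) phic_psi.
Qed.

Lemma closure_transl_seq_compact j :
  seq_compact (distD m) Sphi_cl -> seq_compact (distC m) (comp_transl_cl j).
Proof.
apply: seq_compact_lipschitz_dense => [f g h [[f_reg _] _] [[g_reg _] _] [[h_reg _] _]|||].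
- exact: distC_triangle.
- exact: closure_Sphi_comp.
- by move=> psi chi _ _; exact: distC_le_distD.
- move=> f [_ f_cl] e e0; have [_ [[c _ <-] phic_f]] := f_cl e e0.
  exists (phi_shift phi c); first by apply: Sphi_sub_closure; exists c.
  by rewrite disp_comp_phi_shift.
Qed.

Lemma detcond_closure (psi : V -> V) : disp_reg m psi ->
  (forall e : R, 0 < e -> exists c, (distD m (phi_shift phi c) psi < e%:E)%E) ->
  detcond (dispf psi).
Proof.
move=> psi_reg psi_cl; have [r r0 det_ge] := (detcondP _).1 phi_diffb.2.
apply/detcondP; exists r => // x.
have /choice[c Hc] k : exists c, (distD m (phi_shift phi c) psi < (k.+1%:R^-1)%:E)%E.
  exact/psi_cl/natSinv_gt0.
have phic_reg k := phi_shift_disp_reg (c k).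
have det_cvg : (fun k => \det (1%:M + jac (dispf (phi_shift phi (c k))) x)) @ \oo -->
    \det (1%:M + jac (dispf psi) x).
  by apply: cvg_det => i j; exact: (jac_entry_cvg m_ge1 phic_reg psi_reg Hc).
apply: (closed_cvg _ (@closed_ge _ r) _ _ det_cvg); apply: nearW => k.
by rewrite /= dispf_phi_shift jac_translate.
Qed.

Lemma closure_Sphi_of_comp (psi : V -> V) : (forall j, comp_transl_cl j (disp_comp j psi)) ->
  (forall e : R, 0 < e -> exists c, (distD m (phi_shift phi c) psi < e%:E)%E) ->
  Sphi_cl psi.
Proof.
move=> psi_comp psi_cl.
have psi_reg : disp_reg m psi by move=> j; exact: (psi_comp j).1.1.
split; last by move=> e /psi_cl[c phic_psi]; exists (phi_shift phi c); split => //; exists c.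
split; last exact: detcond_closure.
by move=> j; exact: closure_transl_cb (phi_diffb.1 j) _ (psi_comp j).
Qed.

Lemma closure_Sphi_seq_compact :
  (forall j, seq_compact (distC m) (comp_transl_cl j)) -> seq_compact (distD m) Sphi_cl.
Proof.
move=> transl_seq ps ps_cl.
have [s [s_ge [g g_cl g_cvg]]] :=
  diagonal_extraction transl_seq (fun k j => closure_Sphi_comp j (ps_cl k)).
pose psi : V -> V := fun x => x + \row_j g j x.
have psi_comp j : disp_comp j psi = g j.
  by apply: funext => x; rewrite /disp_comp /Defs.comp /dispf /psi addrAC subrr add0r mxE.
have psi_reg : disp_reg m psi by move=> j; rewrite psi_comp; exact: (g_cl j).1.1.
have ps_reg k : disp_reg m (ps k) := closure_Sphi_disp_reg (ps_cl k).
have psi_cvg e : 0 < e -> exists N, forall k, (N <= k)%N -> (distD m psi (ps (s k)) < e%:E)%E.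
  move=> e0; have en0 : 0 < e / n.+1%:R by rewrite divr_gt0 ?ltr0n.
  have [N hN] := natSinv_lt_eventually en0.
  exists N => k Nk; apply: le_lt_trans (distD_le_componentwise (r := k.+1%:R^-1) _) _.
    by move=> j; rewrite psi_comp; exact/ltW/g_cvg.
  rewrite lte_fin; apply: le_lt_trans (_ : _ <= n.+1%:R * k.+1%:R^-1) _.
    by rewrite ler_wpM2r ?invr_ge0 // ler_nat.
  by rewrite mulrC -ltr_pdivlMr ?ltr0n //; exact: hN.
have psi_cl : Sphi_cl psi.
  apply: closure_Sphi_of_comp => [j|e e0]; first by rewrite psi_comp.
  have e20 : 0 < e / 2 by rewrite divr_gt0.
  have [N hN] := psi_cvg _ e20.
  have [_ /(_ _ e20)[_ [[c _ <-] phic_ps]]] := ps_cl (s N).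
  exists c; rewrite [e]splitr.
  apply: le_lt_trans (distD_triangle (phi_shift_disp_reg c) (ps_reg _) psi_reg) _.
  rewrite EFinD; apply: lteD phic_ps _.
  by rewrite (distD_sym (ps_reg _) psi_reg); exact: hN.
exists psi => // e e0 N; have [N' hN'] := psi_cvg _ e0.
exists (s (maxn N N')); first by apply: leq_trans (s_ge _); rewrite leq_maxl.
by apply: hN'; rewrite leq_maxr.
Qed.

Lemma Diffap_transl_seq_compact j : Diffap m phi -> seq_compact (distC m) (comp_transl_cl j).
Proof.
by move=> [phi_ap _]; apply/compact_distCP; [move=> f [[]] | exact: (phi_ap j).2.2].
Qed.

Lemma Diffap_precompact_Sphi : Diffap m phi -> precompact_in (distD m) (diffb m) (Sphi phi).
Proof.
move=> phi_Diffap; split; first by move=> _ [c _ <-]; exact: diffb_phi_shift.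
apply/compact_distDP; first exact: closure_Sphi_disp_reg.
by apply: closure_Sphi_seq_compact => j; exact: Diffap_transl_seq_compact.
Qed.

Lemma precompact_Sphi_Diffap : precompact_in (distD m) (diffb m) (Sphi phi) -> Diffap m phi.
Proof.
move=> [_ /(compact_distDP closure_Sphi_disp_reg) Sphi_cl_seq].
split; last exact: phi_diffb.2.
move=> j; have [phij_Cb _] := phi_diffb.1 j; split => //; split.
  by move=> _ [b _ <-]; exact: Cb_translate.
apply/compact_distCP; first by move=> f [[]].
exact: closure_transl_seq_compact.
Qed.

Lemma closure_Sphi_Diffap : Diffap m phi -> Sphi_cl `<=` Diffap m.
Proof.
move=> phi_Diffap psi psi_cl; have [[psi_cb psi_det] _] := psi_cl.
split => // j; have [psi_Cb _] := psi_cb j.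
split => //; split; first by move=> _ [b _ <-]; exact: Cb_translate.
apply/compact_distCP; first by move=> g [[]].
have Cb_reg : @Cb R n m `<=` Creg k0 by move=> g [g_reg _].
have transl_reg : transl (disp_comp j phi) `<=` Creg k0.
  by move=> _ [b _ <-]; exact/Creg_translate/(phi_diffb.1 j).1.1.
exact: (seq_compact_closure_in_sub (distC_sym (m := m)) (distC_triangle (m := m))
  Cb_reg transl_reg (closure_transl_translate (closure_Sphi_comp j psi_cl))
  (Diffap_transl_seq_compact phi_Diffap)).
Qed.

End PrecompactTranslates.

Theorem lemma3p2 (R : realType) (n : nat) (m : R) (phi : 'rV[R]_n -> 'rV[R]_n) :
  1 <= m -> diffb m phi ->
  (Diffap m phi <-> precompact_in (@distD R n m) (diffb m) (Sphi phi)) /\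
  (precompact_in (@distD R n m) (diffb m) (Sphi phi) ->
     Sphi phi `<=` Diffap m /\
     closure_in (@distD R n m) (diffb m) (Sphi phi) `<=` Diffap m).
Proof.
move=> m_ge1 phi_diffb.
have Diffap_iff := conj (Diffap_precompact_Sphi m_ge1 phi_diffb)
  (precompact_Sphi_Diffap m_ge1 phi_diffb).
split => // /Diffap_iff phi_Diffap; split; last exact: closure_Sphi_Diffap.
by move=> _ [c _ <-]; exact: Diffap_phi_shift.
Qed.
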